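(* Let $p$ be a prime number and let $A=\{1,p,p^2,p^3,\dots\}$. For every positive integer $n$, $$\sum_{k=1}^{n}N^p_A(k)\big(q^e_A(n-k)-q^o_A(n-k)\big)=\vartheta_p(n)+1.$$
   Context: For a set $A$ of positive integers, $N^p_A(n)$ is the total number of parts, summed over all partitions of $n$ with parts in $A$. $q^e_A(m)$ (resp. $q^o_A(m)$) is the number of partitions of $m$ into pairwise distinct parts from $A$ with an even (resp. odd) number of parts; $q^e_A(0)=1$, $q^o_A(0)=0$. $\vartheta_p(n)$ is the $p$-adic valuation of $n$. *)

From mathcomp Require Import all_boot all_order all_algebra.
Set Implicit Arguments. Unset Strict Implicit. Unset Printing Implicit Defensive.

(* A partition of n with parts in A is encoded by its multiplicity function
   f : 'I_n.+1 -> 'I_n.+1 (f i = number of parts equal to i); only positive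
   parts belonging to A may have nonzero multiplicity, and sum_i i * f i = n.
   (Multiplicities and part sizes are at most n, so this is a bijection with
   the partitions of n with parts in A.) *)
Definition partitionsA (A : pred nat) (n : nat) : {set {ffun 'I_n.+1 -> 'I_n.+1}} :=
  [set f : {ffun 'I_n.+1 -> 'I_n.+1} | [forall i : 'I_n.+1, (0 < f i)%N ==> (0 < i)%N && (nat_of_ord i \in A)]
           && ((\sum_(i < n.+1) i * f i)%N == n)].

Definition NA (A : pred nat) (n : nat) : nat :=
  (\sum_(f in partitionsA A n) \sum_(i < n.+1) nat_of_ord (f i))%N.

(* Partitions of m into pairwise distinct parts from A, encoded as their set
   of parts (a subset of {1,...,m}). *)
Definition distinct_partitionsA (A : pred nat) (m : nat) : {set {set 'I_m.+1}} :=
  [set S : {set 'I_m.+1} | [forall i in S, (0 < i)%N && (nat_of_ord i \in A)]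
                           && ((\sum_(i in S) nat_of_ord i)%N == m)].

Definition qeA (A : pred nat) (m : nat) : nat :=
  #|[set S in distinct_partitionsA A m | ~~ odd #|S|]|.
Definition qoA (A : pred nat) (m : nat) : nat :=
  #|[set S in distinct_partitionsA A m | odd #|S|]|.

(* A = {1, p, p^2, ...}; since p^i = x forces i <= x for p >= 2, the
   bounded exponent is no restriction. *)
Definition powers (p : nat) : pred nat :=
  fun x => [exists i : 'I_x.+1, x == p ^ i].

(* Let P(q) = \prod_(a in A) 1/(1 - q^a) count the partitions with parts in A.
   Marking a part size m and weighting each partition by the multiplicity j of m
   shows that N_A has generating function
   \sum_(m in A) P(q) (1 - q^m) \sum_j j q^(m j) = P(q) \sum_(m in A) q^m / (1 - q^m),
   while q^e_A - q^o_A has generating function 1/P(q) = \prod_(a in A) (1 - q^a).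
   The convolution thus has generating function \sum_(m in A) q^m / (1 - q^m), whose
   n-th coefficient is the number of divisors of n in A; for the powers of p these
   are 1, p, ..., p^(logn p n).  Series are represented by polynomials truncated
   beyond degree n, which is all the coefficient of q^n depends on. *)

From mathcomp Require Import all_boot all_order all_algebra ring.
Import GRing.Theory.
Local Open Scope ring_scope.

Section EqUpto.
Local Set Implicit Arguments.
Local Unset Strict Implicit.
Variable R : comNzRingType.

Definition eq_upto (n : nat) (p q : {poly R}) := forall i, (i <= n)%N -> p`_i = q`_i.

Lemma eq_upto_trans n p q r : eq_upto n p q -> eq_upto n q r -> eq_upto n p r.
Proof. by move=> pq qr i le_in; rewrite pq // qr. Qed.

Lemma eq_uptoB n p q p' q' :
  eq_upto n p p' -> eq_upto n q q' -> eq_upto n (p - q) (p' - q').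
Proof. by move=> pp' qq' i le_in; rewrite !coefB pp' // qq'. Qed.

Lemma eq_uptoM n p q p' q' :
  eq_upto n p p' -> eq_upto n q q' -> eq_upto n (p * q) (p' * q').
Proof.
move=> pp' qq' i le_in; rewrite !coefM; apply: eq_bigr => j _.
have le_jn : (j <= n)%N by rewrite (leq_trans _ le_in) // -ltnS.
by rewrite pp' // qq' // (leq_trans (leq_subr _ _) le_in).
Qed.

Lemma eq_upto_mulr0 n p q : eq_upto n q 0 -> eq_upto n (p * q) 0.
Proof. by move=> q0; rewrite -(mulr0 p); apply: eq_uptoM. Qed.

Lemma eq_upto_sum n (I : Type) (r : seq I) (P : pred I) (F G : I -> {poly R}) :
  (forall i, P i -> eq_upto n (F i) (G i)) ->
  eq_upto n (\sum_(i <- r | P i) F i) (\sum_(i <- r | P i) G i).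
Proof.
move=> FG; apply: big_ind2 => // p p' q q' pp' qq' i le_in.
by rewrite !coefD pp' // qq'.
Qed.

Lemma eq_upto_prod n (I : Type) (r : seq I) (P : pred I) (F G : I -> {poly R}) :
  (forall i, P i -> eq_upto n (F i) (G i)) ->
  eq_upto n (\prod_(i <- r | P i) F i) (\prod_(i <- r | P i) G i).
Proof. by move=> FG; apply: big_ind2 => // *; exact: eq_uptoM. Qed.

Lemma eq_upto_sum0 n (I : Type) (r : seq I) (P : pred I) (F : I -> {poly R}) :
  (forall i, P i -> eq_upto n (F i) 0) -> eq_upto n (\sum_(i <- r | P i) F i) 0.
Proof.
move=> F0; apply: (eq_upto_trans (q := \sum_(i <- r | P i) 0)).
  exact: eq_upto_sum.
by rewrite big1_eq.
Qed.

Lemma eq_upto_sum_mkcond n (I : Type) (r : seq I) (P : pred I) (F : I -> {poly R}) :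
  (forall i, ~~ P i -> eq_upto n (F i) 0) ->
  eq_upto n (\sum_(i <- r) F i) (\sum_(i <- r | P i) F i).
Proof.
move=> F0; rewrite [X in eq_upto _ _ X]big_mkcond; apply: eq_upto_sum => i _.
by case: ifP => // /negbT /F0.
Qed.

Lemma eq_upto_prod_mkcond n (I : Type) (r : seq I) (P : pred I) (F : I -> {poly R}) :
  (forall i, ~~ P i -> eq_upto n (F i) 1) ->
  eq_upto n (\prod_(i <- r) F i) (\prod_(i <- r | P i) F i).
Proof.
move=> F1; rewrite [X in eq_upto _ _ X]big_mkcond; apply: eq_upto_prod => i _.
by case: ifP => // /negbT /F1.
Qed.

Lemma eq_upto_prod0 n (I : finType) (F : I -> {poly R}) i0 :
  eq_upto n (F i0) 0 -> eq_upto n (\prod_i F i) 0.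
Proof.
by move=> F0; rewrite (bigD1 i0) // -(mul0r (\prod_(i | i != i0) F i)); apply: eq_uptoM.
Qed.

Lemma eq_upto_Xn n d : (n < d)%N -> eq_upto n 'X^d 0.
Proof. by move=> lt_nd i le_in; rewrite coefXn coef0 ltn_eqF // (leq_ltn_trans le_in). Qed.

End EqUpto.

Section GeometricSums.
Variable R : comNzRingType.

Lemma sum_exprs_mul_subr (x : R) n : (\sum_(j < n) x ^+ j) * (1 - x) = 1 - x ^+ n.
Proof. by rewrite mulrC -opprB mulNr -subrX1 opprB. Qed.

Lemma sum_weighted_exprs_mul_subr (x : R) n :
  (\sum_(j < n.+1) j%:R * x ^+ j) * (1 - x) = \sum_(j < n) x ^+ j.+1 - n%:R * x ^+ n.+1.
Proof.
elim: n => [|n IHn]; first by rewrite big_ord1 big_ord0 !mul0r subrr.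
by rewrite big_ord_recr /= mulrDl IHn big_ord_recr /= !exprS; ring.
Qed.

End GeometricSums.

Definition is_part (A : pred nat) (i : nat) := (0 < i)%N && (i \in A).

Lemma sum_is_part_dvdn A n : (0 < n)%N ->
  (\sum_(d < n.+1) (is_part A d && (d %| n)))%N = count A (divisors n).
Proof.
move=> n_gt0.
have divisors_iota : perm_eq [seq d <- iota 0 n.+1 | (0 < d) && (d %| n)]%N (divisors n).
  apply: uniq_perm; [exact/filter_uniq/iota_uniq | exact: divisors_uniq | move=> d].
  rewrite mem_filter mem_iota -dvdn_divisors //=.
  apply/idP/idP => [/andP[/andP[]]// | dvd_dn].
  by rewrite dvd_dn (dvdn_gt0 n_gt0 dvd_dn) ltnS (dvdn_leq n_gt0 dvd_dn).
rewrite -(permP divisors_iota) count_filter.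
rewrite -(big_mkord xpredT (fun d => (is_part A d && (d %| n))%N : nat)).
rewrite -sumn_count sumnE big_map.
by apply: eq_bigr => d _; rewrite /is_part /= andbCA andbA.
Qed.

Section PartitionPolynomials.
Local Set Implicit Arguments.
Local Unset Strict Implicit.
Variables (R : comNzRingType) (A : pred nat).

Definition part_mono (i : nat) : {poly R} := if is_part A i then 'X^i else 0.

Lemma part_monoX i j :
  part_mono i ^+ j = if (0 < j)%N ==> is_part A i then 'X^(i * j) else 0.
Proof.
rewrite /part_mono; case: (is_part A i); first by rewrite implybT exprM.
by case: j => [|j]; rewrite ?muln0 ?expr0 // expr0n.
Qed.

Lemma eq_upto_part_monoX_mul k i j : (k < i * j)%N -> eq_upto k (part_mono i ^+ j) 0.
Proof. by move=> lt_k_ij; rewrite part_monoX; case: ifP => // _; apply: eq_upto_Xn. Qed.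

Lemma eq_upto_part_monoX k i j : (k < j)%N -> eq_upto k (part_mono i ^+ j) 0.
Proof.
move=> lt_kj; have [/andP[i_gt0 _] | not_part] := boolP (is_part A i).
  by apply: eq_upto_part_monoX_mul; rewrite (leq_trans lt_kj) // leq_pmull.
by rewrite /part_mono (negbTE not_part) expr0n gtn_eqF // (leq_ltn_trans _ lt_kj).
Qed.

Lemma prod_part_monoX n (f : 'I_n -> nat) :
  \prod_(i < n) part_mono i ^+ f i =
  if [forall i, (0 < f i)%N ==> is_part A i] then 'X^(\sum_(i < n) i * f i) else 0.
Proof.
case: ifP => [/forallP allowed | /negbT /forallPn[i not_allowed]].
  by rewrite -prodrXr; apply: eq_bigr => i _; rewrite part_monoX allowed.
by rewrite (bigD1 i) //= part_monoX (negbTE not_allowed) mul0r.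
Qed.

(* Expanding the product in [NA_poly N] over multiplicity functions, the term of a
   partition gets the multiplicity of the marked part size [m] as coefficient. *)
Definition marked_factor (N m i : nat) : {poly R} :=
  \sum_(j < N.+1) (if i == m then j%:R else 1) * part_mono i ^+ j.

Definition NA_poly (N : nat) : {poly R} :=
  \sum_(m < N.+1) \prod_(i < N.+1) marked_factor N m i.

Definition QA_poly (N : nat) : {poly R} := \prod_(i < N.+1) (1 - part_mono i).

Lemma coef_NA_poly k : (NA_poly k)`_k = (NA A k)%:R.
Proof.
rewrite /NA_poly /marked_factor.
under eq_bigr => m _ do rewrite bigA_distr_bigA /=.
rewrite exchange_big coef_sum /NA natr_sum [RHS]big_mkcond /=.
apply: eq_bigr => f _.
have -> : \sum_(m < k.+1) \prod_(i < k.+1)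
      ((if i == m :> nat then (f i)%:R else 1) * part_mono i ^+ f i)
    = (\prod_(i < k.+1) part_mono i ^+ f i) *+ \sum_(m < k.+1) f m.
  rewrite -sumrMnr; apply: eq_bigr => m _.
  by rewrite big_split /= -big_mkcond (big_pred1 m) // mulr_natl.
rewrite coefMn prod_part_monoX /partitionsA inE /is_part.
case: [forall i, _] => /=; last by rewrite coef0 mul0rn.
by rewrite coefXn eq_sym; case: eqP; rewrite ?mul0rn.
Qed.

Lemma prod_part_mono_in n (J : {set 'I_n}) :
  \prod_(i in J) part_mono i =
  if [forall i in J, is_part A i] then 'X^(\sum_(i in J) i) else 0.
Proof.
transitivity (\prod_(i < n) part_mono i ^+ (i \in J)).
  by rewrite big_mkcond; apply: eq_bigr => i _; case: (i \in J).
rewrite prod_part_monoX; congr (if _ then 'X^_ else _).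
  by apply: eq_forallb => i; rewrite lt0b.
by rewrite [RHS]big_mkcond; apply: eq_bigr => i _; case: (i \in J); rewrite ?muln1 ?muln0.
Qed.

Lemma coef_QA_poly m : (QA_poly m)`_m = (qeA A m)%:R - (qoA A m)%:R.
Proof.
have card_sum (X : {set {set 'I_m.+1}}) : #|X|%:R = \sum_J (J \in X)%:R :> R.
  by rewrite -sum1_card natr_sum [LHS]big_mkcond; apply: eq_bigr => J _; case: (J \in X).
rewrite /qeA /qoA !card_sum -sumrB /QA_poly.
under eq_bigr => i _ do rewrite addrC.
rewrite bigA_distr coef_sum; apply: eq_bigr => J _.
rewrite -big_mkcond /= prodrN prod_part_mono_in -signr_odd mulr_sign.
rewrite /distinct_partitionsA !inE /is_part.
case: [forall i in J, _] => /=; first last.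
  by rewrite oppr0 if_same coef0 subrr.
by case: (odd #|J|); rewrite /= ?coefN coefXn ?andbT ?andbF ?subr0 ?sub0r eq_sym.
Qed.

Lemma QA_poly_trunc k N : (k <= N)%N -> eq_upto k (QA_poly N) (QA_poly k).
Proof.
move=> le_kN; rewrite /QA_poly.
rewrite (big_ord_widen (n1 := k.+1) N.+1 (fun i => 1 - part_mono i)) //.
apply: eq_upto_prod_mkcond => i; rewrite -leqNgt => lt_ki.
rewrite -[X in eq_upto _ _ X]subr0 -(expr1 (part_mono i)); apply: eq_uptoB => //.
by apply: eq_upto_part_monoX_mul; rewrite muln1.
Qed.

Lemma marked_factor_trunc k N m i :
  (k <= N)%N -> eq_upto k (marked_factor N m i) (marked_factor k m i).
Proof.
move=> le_kN; rewrite /marked_factor.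
rewrite (big_ord_widen (n1 := k.+1) N.+1
  (fun j => (if i == m then j%:R else 1) * part_mono i ^+ j)) //.
apply: eq_upto_sum_mkcond => j; rewrite -leqNgt => lt_kj.
by apply: eq_upto_mulr0; apply: eq_upto_part_monoX.
Qed.

Lemma marked_factor_high k m i :
  (k < i)%N -> eq_upto k (marked_factor k m i) (i != m)%:R.
Proof.
move=> lt_ki; rewrite /marked_factor big_ord_recl -[X in eq_upto _ _ X]addr0.
move=> t le_tk; rewrite !coefD; congr (_ + _); first by rewrite expr0 mulr1; case: eqP.
move: t le_tk; apply: eq_upto_sum0 => j _; apply: eq_upto_mulr0.
by apply: eq_upto_part_monoX_mul; rewrite lift0 (leq_trans lt_ki) // leq_pmulr.
Qed.

Lemma NA_poly_trunc k N : (k <= N)%N -> eq_upto k (NA_poly N) (NA_poly k).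
Proof.
move=> le_kN; rewrite /NA_poly.
apply: (eq_upto_trans (q := \sum_(m < N.+1) \prod_(i < N.+1) marked_factor k m i)).
  by apply: eq_upto_sum => m _; apply: eq_upto_prod => i _; apply: marked_factor_trunc.
rewrite (big_ord_widen (n1 := k.+1) N.+1
  (fun m => \prod_(i < k.+1) marked_factor k m i)) //.
apply: (eq_upto_trans
  (q := \sum_(m < N.+1 | (m < k.+1)%N) \prod_(i < N.+1) marked_factor k m i)).
  apply: eq_upto_sum_mkcond => m; rewrite -leqNgt => lt_km; apply: (eq_upto_prod0 (i0 := m)).
  by apply: eq_upto_trans (marked_factor_high m lt_km) _; rewrite eqxx.
apply: eq_upto_sum => m le_mk.
rewrite (big_ord_widen (n1 := k.+1) N.+1 (marked_factor k m)) //.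
apply: eq_upto_prod_mkcond => i; rewrite -leqNgt => lt_ki.
apply: eq_upto_trans (marked_factor_high _ lt_ki) _.
by rewrite gtn_eqF // (leq_trans le_mk).
Qed.

Lemma NA_0 : NA A 0 = 0%N.
Proof. by rewrite /NA big1 // => f _; rewrite big1 // => i _; case: (f i) => -[]. Qed.

Lemma coef_NA_QA_poly n :
  (NA_poly n * QA_poly n)`_n =
  \sum_(1 <= k < n.+1) (NA A k)%:R * ((qeA A (n - k))%:R - (qoA A (n - k))%:R).
Proof.
rewrite coefM -(big_mkord xpredT (fun k => (NA_poly n)`_k * (QA_poly n)`_(n - k))).
rewrite big_ltn // (NA_poly_trunc (leq0n n) (leqnn 0)) coef_NA_poly NA_0 mul0r add0r.
apply: eq_big_nat => k /andP[_]; rewrite ltnS => le_kn.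
rewrite (NA_poly_trunc le_kn (leqnn k)) (QA_poly_trunc (leq_subr k n) (leqnn _)).
by rewrite coef_NA_poly coef_QA_poly.
Qed.

Lemma marked_factor_mul_QA N m i :
  eq_upto N (marked_factor N m i * (1 - part_mono i))
    (if i == m then \sum_(j < N) part_mono i ^+ j.+1 else 1).
Proof.
have small_tail c : eq_upto N (c * part_mono i ^+ N.+1) 0.
  by apply: eq_upto_mulr0; apply: eq_upto_part_monoX.
rewrite /marked_factor; case: eqP => _.
  rewrite sum_weighted_exprs_mul_subr -[X in eq_upto _ _ X]subr0.
  exact: eq_uptoB.
rewrite (eq_bigr _ (fun j _ => mul1r _)).
rewrite sum_exprs_mul_subr -[X in eq_upto _ _ X]subr0 -[part_mono i ^+ _]mul1r.
exact: eq_uptoB.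
Qed.

Lemma NA_QA_poly n :
  eq_upto n (NA_poly n * QA_poly n) (\sum_(m < n.+1) \sum_(j < n) part_mono m ^+ j.+1).
Proof.
rewrite /NA_poly /QA_poly mulr_suml; apply: eq_upto_sum => m _; rewrite -big_split /=.
apply: (eq_upto_trans (q := \prod_(i < n.+1)
  if i == m :> nat then \sum_(j < n) part_mono i ^+ j.+1 else 1)).
  by apply: eq_upto_prod => i _; apply: marked_factor_mul_QA.
by rewrite -big_mkcond (big_pred1 m).
Qed.

Lemma coef_sum_part_monoXS n d : (0 < n)%N ->
  (\sum_(j < n) part_mono d ^+ j.+1)`_n = (is_part A d && (d %| n)%N)%:R.
Proof.
move=> n_gt0; rewrite coef_sum /part_mono.
case: (boolP (is_part A d)) => [/andP[d_gt0 _] | _] /=; last first.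
  by rewrite big1 // => j _; rewrite expr0n coef0.
under eq_bigr do rewrite -exprM coefXn.
have [/dvdnP[q def_n] | not_dvd] := boolP (d %| n)%N; last first.
  rewrite big1 // => j _; case: eqP => // def_n.
  by case/negP: not_dvd; rewrite def_n dvdn_mulr.
have q_gt0 : (0 < q)%N by move: n_gt0; rewrite def_n muln_gt0 => /andP[].
have coef_j (j : 'I_n) : (n == d * j.+1)%:R = (if j == q.-1 :> nat then 1 else 0) :> R.
  by rewrite {1}def_n mulnC eqn_pmul2l // -(prednK q_gt0) eqSS eq_sym; case: eqP.
rewrite (eq_bigr _ (fun j _ => coef_j j)) -big_mkcond (big_ord1_eq _ (fun _ => 1)).
by rewrite (prednK q_gt0) def_n leq_pmulr.
Qed.

Theorem sum_NA_signed_distinct n : (0 < n)%N ->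
  \sum_(1 <= k < n.+1) (NA A k)%:R * ((qeA A (n - k))%:R - (qoA A (n - k))%:R)
  = (count A (divisors n))%:R :> R.
Proof.
move=> n_gt0; rewrite -coef_NA_QA_poly (NA_QA_poly (leqnn n)) coef_sum.
by rewrite (eq_bigr _ (fun d _ => coef_sum_part_monoXS _ n_gt0)) -natr_sum sum_is_part_dvdn.
Qed.

End PartitionPolynomials.

Lemma powersP p : (1 < p)%N -> forall d, reflect (exists e, d = p ^ e)%N (powers p d).
Proof.
move=> p_gt1 d; apply: (iffP existsP) => [[e /eqP ->] | [e ->]]; first by exists e.
by exists (Ordinal (leqW (ltn_expl e p_gt1))).
Qed.

Lemma count_powers_divisors p n : prime p -> (0 < n)%N ->
  count (powers p) (divisors n) = (logn p n).+1.
Proof.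
move=> p_prime n_gt0; have p_gt1 := prime_gt1 p_prime.
rewrite -size_filter -[(logn p n).+1](size_iota 0) -(size_map (expn p) (iota 0 _)).
apply/perm_size/uniq_perm; first exact/filter_uniq/divisors_uniq.
  by rewrite map_inj_uniq ?iota_uniq //; apply: expnI.
move=> d; rewrite mem_filter -dvdn_divisors //; apply/andP/mapP.
  case=> /(powersP _ p_gt1)[e ->]; rewrite pfactor_dvdn // => le_e.
  by exists e; rewrite ?mem_iota.
case=> e; rewrite mem_iota add0n ltnS -(pfactor_dvdn _ p_prime n_gt0) => dvd_en ->.
by split=> //; apply/(powersP _ p_gt1); exists e.
Qed.

Theorem corollary7 (p n : nat) : prime p -> (0 < n)%N ->
  \sum_(1 <= k < n.+1)
      (NA (powers p) k)%:Z * ((qeA (powers p) (n - k))%:Z - (qoA (powers p) (n - k))%:Z)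
  = (logn p n)%:Z + 1.
Proof.
move=> p_prime n_gt0.
rewrite -natz natr1 -(count_powers_divisors _ _ p_prime n_gt0).
rewrite -(sum_NA_signed_distinct int (powers p) n_gt0).
by apply: eq_bigr => k _; rewrite !natz.
Qed.
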